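(* Let $\Bbbk$ be a field with $\mathrm{char}(\Bbbk)\neq2$, and let $\xi,\gamma\in\Bbbk$. Let $K=T_2(-1)$ be the Sweedler Hopf algebra with $\mathcal{R}$-matrix $\mathcal{R}_\xi$, $\mathcal{B}=K\text{-}\mathbf{Mod}$, and $A_\gamma=\Bbbk[u]$ the algebra in $\mathcal{B}$ described in the context. Then the $\mathcal{B}$-center of $A_\gamma$ (for $\mathcal{C}=\Bbbk\text{-}\mathbf{Mod}(\mathcal{B})\cong\mathcal{B}$) equals its left center: $$Z_{\mathcal{B}}(A_\gamma)=C^l(A_\gamma)=\Bbbk[u^2],\qquad g\cdot u^2=u^2,\quad x\cdot u^2=0,$$ as a commutative algebra in $\mathcal{B}\cong\mathcal{Z}_{\mathcal{B}}(\mathcal{C})$, independently of $\xi$ and $\gamma$.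
   Context: $T_2(-1)=\Bbbk\langle g,x\rangle/(g^2-1,x^2,gx+xg)$ with $g$ group-like and $\Delta(x)=g\otimes x+x\otimes1$; it is quasi-triangular with $\mathcal{R}_\xi=\frac12(1\otimes1+1\otimes g+g\otimes1-g\otimes g)+\frac\xi2(x\otimes x+x\otimes gx+gx\otimes gx-gx\otimes x)$. $\mathcal{B}=K\text{-}\mathbf{Mod}$ with braiding $\Psi(v\otimes w)=(\mathcal{R}_\xi^{(2)}\cdot w)\otimes(\mathcal{R}_\xi^{(1)}\cdot v)$. $A_\gamma=\Bbbk[u]$ is the $K$-module algebra with $g\cdot u=-u$, $x\cdot u=\gamma$ (action extended to products by the module algebra rule). Taking $H=\Bbbk$, $\mathcal{C}=\Bbbk\text{-}\mathbf{Mod}(\mathcal{B})$ is identified with $\mathcal{B}$ and its relative center $\mathcal{Z}_{\mathcal{B}}(\mathcal{C})$ with $\mathcal{B}$ (half-braidings given by $\Psi$). The $\mathcal{B}$-center of an algebra $(A,m)$ is the terminal object among pairs $(Z,\zeta\colon Z\to A)$ with $m(\zeta\otimes\mathrm{Id})=m(\mathrm{Id}\otimes\zeta)\Psi_{Z,A}$; the left center $C^l(A)$ is the largest subobject $C\subseteq A$ with $m\Psi_{C,A}=m$ on $C\otimes A$. *)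

(* Concrete model of the Sweedler Hopf algebra K = T_2(-1)
   acting on A_gamma = k[u] (= {poly k}, u = 'X), and of the braiding Psi
   given by the R-matrix R_xi. *)
From HB Require Import structures.
From mathcomp Require Import all_boot all_order all_algebra.
Set Implicit Arguments. Unset Strict Implicit. Unset Printing Implicit Defensive.
Import Order.TTheory GRing.Theory Num.Theory.
Local Open Scope ring_scope.

Inductive Kb := K1 | Kg | Kx | Kgx.

Definition Kact (V : Type) (gV xV : V -> V) (h : Kb) : V -> V :=
  match h with K1 => id | Kg => gV | Kx => xV | Kgx => fun v => gV (xV v) end.

(* The R-matrix R_xi = sum of c * (h1 (x) h2), listed as (c, h1, h2):
   R_xi = 1/2 (1(x)1 + 1(x)g + g(x)1 - g(x)g)
        + xi/2 (x(x)x + x(x)gx + gx(x)gx - gx(x)x). *)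
Definition Rmat (k : fieldType) (xi : k) : seq (k * Kb * Kb) :=
  [:: (2^-1, K1, K1); (2^-1, K1, Kg); (2^-1, Kg, K1); (- 2^-1, Kg, Kg);
      (xi / 2, Kx, Kx); (xi / 2, Kx, Kgx); (xi / 2, Kgx, Kgx); (- (xi / 2), Kgx, Kx)].

(* Given K-modules V, W and a bilinear map b : W -> V -> T,
   mPsi ... b v w = b-composed-with-Psi_{V,W}(v (x) w)
                  = sum R^(2).w  `b`  R^(1).v. *)
Definition mPsi (k : fieldType) (xi : k) (V W : Type) (T : lmodType k)
  (gV xV : V -> V) (gW xW : W -> W) (b : W -> V -> T) (v : V) (w : W) : T :=
  \sum_(r <- Rmat xi) r.1.1 *: b (Kact gW xW r.2 w) (Kact gV xV r.1.2 v).

(* The K-module algebra structure on A_gamma = k[u]: g.u = -u, x.u = gamma,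
   extended to monomials by the module-algebra rule
   h.(u^n * u) = (h1.u^n)(h2.u^n) with Delta g = g(x)g, Delta x = g(x)x + x(x)1,
   h.1 = eps(h) 1, and then linearly. *)
Fixpoint gpow (k : fieldType) (n : nat) : {poly k} :=
  if n is n'.+1 then gpow k n' * (- 'X) else 1.
Fixpoint xpow (k : fieldType) (gamma : k) (n : nat) : {poly k} :=
  if n is n'.+1 then gpow k n' * gamma%:P + xpow gamma n' * 'X else 0.

Definition GA (k : fieldType) (p : {poly k}) : {poly k} :=
  \sum_(i < size p) p`_i *: gpow k i.
Definition XA (k : fieldType) (gamma : k) (p : {poly k}) : {poly k} :=
  \sum_(i < size p) p`_i *: xpow gamma i.

Definition is_Ksubmod (k : fieldType) (gamma : k) (C : {poly k} -> Prop) :=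
  [/\ C 0, (forall p q, C p -> C q -> C (p + q)),
      (forall (a : k) p, C p -> C (a *: p)),
      (forall p, C p -> C (GA p)) & (forall p, C p -> C (XA gamma p))].

Definition left_central (k : fieldType) (xi gamma : k) (C : {poly k} -> Prop) :=
  forall c a, C c ->
    mPsi xi (@GA k) (XA gamma) (@GA k) (XA gamma) (fun a' c' => a' * c') c a = c * a.

Definition is_left_center (k : fieldType) (xi gamma : k) (C : {poly k} -> Prop) :=
  [/\ is_Ksubmod gamma C, left_central xi gamma C &
      forall C', is_Ksubmod gamma C' -> left_central xi gamma C' ->
        forall p, C' p -> C p].

(* K-modules Z (objects of B ~ Z_B(C), half-braiding given by Psi). *)
Definition sweedler_module (k : fieldType) (Z : lmodType k) (gZ xZ : Z -> Z) :=
  [/\ forall z, gZ (gZ z) = z, forall z, xZ (xZ z) = 0 &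
      forall z, gZ (xZ z) = - xZ (gZ z)].

Definition admissible_pair (k : fieldType) (xi gamma : k) (Z : lmodType k)
  (gZ xZ : Z -> Z) (zeta : Z -> {poly k}) :=
  [/\ (forall (a : k) z1 z2, zeta (a *: z1 + z2) = a *: zeta z1 + zeta z2),
      (forall z, zeta (gZ z) = GA (zeta z)),
      (forall z, zeta (xZ z) = XA gamma (zeta z)) &
      (forall z a, zeta z * a =
         mPsi xi gZ xZ (@GA k) (XA gamma) (fun a' z' => a' * zeta z') z a)].

(* (C, inclusion) is the B-center Z_B(A_gamma): it is an admissible pair and
   it is terminal: every admissible pair (Z, zeta) factors uniquely through
   the inclusion via a K-linear map phi : Z -> C (represented as a map into
   A_gamma with values in C). *)
Definition is_B_center (k : fieldType) (xi gamma : k) (C : {poly k} -> Prop) :=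
  [/\ is_Ksubmod gamma C,
      (forall c a, C c -> c * a =
         mPsi xi (@GA k) (XA gamma) (@GA k) (XA gamma) (fun a' c' => a' * c') c a) &
      forall (Z : lmodType k) (gZ xZ : Z -> Z),
        (forall (a : k) z1 z2, gZ (a *: z1 + z2) = a *: gZ z1 + gZ z2) ->
        (forall (a : k) z1 z2, xZ (a *: z1 + z2) = a *: xZ z1 + xZ z2) ->
        sweedler_module gZ xZ ->
        forall zeta : Z -> {poly k}, admissible_pair xi gamma gZ xZ zeta ->
        let is_factor := fun phi : Z -> {poly k} =>
          [/\ (forall z, C (phi z)),
              (forall (a : k) z1 z2, phi (a *: z1 + z2) = a *: phi z1 + phi z2),
              (forall z, phi (gZ z) = GA (phi z)),
              (forall z, phi (xZ z) = XA gamma (phi z)) &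
              (forall z, phi z = zeta z)] in
        (exists phi, is_factor phi) /\
        (forall phi1 phi2, is_factor phi1 -> is_factor phi2 -> phi1 =1 phi2)].

Definition ku2 (k : fieldType) (p : {poly k}) : Prop :=
  exists q : {poly k}, p = q \Po 'X^2.

(** [g] acts on [k[u]] as the substitution [u |-> -u] and [x] does not raise
    degrees and kills [k[u^2]]; hence on [k[u^2]] the braiding with [A] is the
    flip, and [k[u^2]] is a left-central subobject.  Conversely, for an odd
    polynomial [c] one computes [Psi(c (x) u) = -u c + xi gamma (x.c)], so if
    [c] commutes with [u] through [Psi] then [2 u c = xi gamma (x.c)], and
    comparing degrees gives [c = 0] (here [2 != 0] is used).  Applied to the
    odd part [p - g.p] of an element of a left-central subobject, or to
    [zeta (z - g.z) = p - g.p] for an admissible pair with [p = zeta z], this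
    forces [p] into [k[u^2]]. *)
From HB Require Import structures.
From mathcomp Require Import all_boot all_order all_algebra.
From mathcomp Require Import ring.
Import GRing.Theory.
Set Implicit Arguments. Unset Strict Implicit.
Local Open Scope ring_scope.

Section SweedlerAction.
Variable k : fieldType.

Lemma gpowE n : gpow k n = (- 'X) ^+ n.
Proof. by elim: n => [|n IHn] //=; rewrite IHn exprSr. Qed.

Lemma GAE (p : {poly k}) : GA p = p \Po (- 'X).
Proof. by rewrite /GA comp_polyE; apply: eq_bigr => i _; rewrite gpowE. Qed.

Lemma GAC (c : k) : GA c%:P = c%:P.
Proof. by rewrite GAE comp_polyC. Qed.

Lemma GA0 : GA (0 : {poly k}) = 0.
Proof. by rewrite GAE comp_poly0. Qed.

Lemma GAX : GA ('X : {poly k}) = - 'X.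
Proof. by rewrite GAE comp_polyX. Qed.

Lemma GAB (p q : {poly k}) : GA (p - q) = GA p - GA q.
Proof. by rewrite !GAE comp_polyB. Qed.

Lemma GAK : involutive (@GA k).
Proof.
move=> p; rewrite !GAE -comp_polyA -scaleN1r comp_polyZ comp_polyX.
by rewrite scalerA mulN1r opprK scale1r comp_polyXr.
Qed.

Lemma GA_comp_X2 (q : {poly k}) : GA (q \Po 'X^2) = q \Po 'X^2.
Proof. by rewrite GAE -comp_polyA comp_Xn_poly sqrrN. Qed.

Variable gamma : k.

Lemma xpow_double n : xpow gamma n.*2 = 0.
Proof.
elim: n => [|n IHn] //; rewrite doubleS /= IHn mul0r addr0 !gpowE.
by rewrite -!mulrA [gamma%:P * _]mulrC mulNr mulrN addNr.
Qed.

Lemma size_xpow n : (size (xpow gamma n) <= n)%N.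
Proof.
elim: n => [|n IHn] /=; first by rewrite size_poly0.
rewrite gpowE mulrC mul_polyC; apply: leq_trans (size_polyD _ _) _.
rewrite geq_max; apply/andP; split.
  apply: leq_trans (size_scale_leq _ _) _; apply: leq_trans (size_poly_exp_leq _ _) _.
  by rewrite size_polyN size_polyX mul1n.
have [->|xn0] := eqVneq (xpow gamma n) 0; first by rewrite mul0r size_poly0.
by rewrite size_mulX.
Qed.

Lemma size_XA (p : {poly k}) : (size (XA gamma p) <= size p)%N.
Proof.
apply: leq_trans (size_sum _ _ _) _; apply/bigmax_leqP => i _.
exact: leq_trans (size_scale_leq _ _) (leq_trans (size_xpow i) (ltnW (ltn_ord i))).
Qed.

Lemma XA_comp_X2 (q : {poly k}) : XA gamma (q \Po 'X^2) = 0.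
Proof.
rewrite /XA big1 // => i _; have [odd_i|even_i] := boolP (odd i).
  by rewrite coef_comp_poly_Xn // dvdn2 odd_i scale0r.
by rewrite -(odd_double_half i) (negbTE even_i) add0n xpow_double scaler0.
Qed.

Lemma XAX : XA gamma 'X = gamma%:P.
Proof.
rewrite /XA size_polyX !big_ord_recr big_ord0 /= !coefX scale0r !add0r scale1r.
by rewrite mul0r mul1r addr0.
Qed.

End SweedlerAction.

Section Braiding.
Variables (k : fieldType) (xi : k).

Lemma Kact_natural (V U : Type) (gV xV : V -> V) (gU xU : U -> U) (f : V -> U) :
  (forall v, f (gV v) = gU (f v)) -> (forall v, f (xV v) = xU (f v)) ->
  forall h v, f (Kact gV xV h v) = Kact gU xU h (f v).
Proof. by move=> fg fx [] v //=; rewrite ?fg ?fx. Qed.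

Lemma mPsi_natural (V U W : Type) (T : lmodType k) (gV xV : V -> V)
    (gU xU : U -> U) (gW xW : W -> W) (b : W -> U -> T) (f : V -> U) :
  (forall v, f (gV v) = gU (f v)) -> (forall v, f (xV v) = xU (f v)) ->
  forall v w, mPsi xi gV xV gW xW (fun w v => b w (f v)) v w =
              mPsi xi gU xU gW xW b (f v) w.
Proof. by move=> fg fx v w; apply: eq_bigr => r _; rewrite (Kact_natural fg fx). Qed.

Lemma mPsiE (V W : Type) (T : lmodType k) (gV xV : V -> V) (gW xW : W -> W)
    (b : W -> V -> T) v w :
  mPsi xi gV xV gW xW b v w =
    2^-1 *: b w v + 2^-1 *: b (gW w) v + 2^-1 *: b w (gV v) - 2^-1 *: b (gW w) (gV v)
  + (xi / 2) *: b (xW w) (xV v) + (xi / 2) *: b (gW (xW w)) (xV v)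
  + (xi / 2) *: b (gW (xW w)) (gV (xV v)) - (xi / 2) *: b (xW w) (gV (xV v)).
Proof. by rewrite /mPsi /Rmat !big_cons big_nil /= addr0 !scaleNr !addrA. Qed.

End Braiding.

Section Center.
Variables (k : fieldType) (xi gamma : k).
Hypothesis two_neq0 : (2%:R : k) != 0.

Local Notation psi :=
  (mPsi xi (@GA k) (XA gamma) (@GA k) (XA gamma) (fun a' c' => a' * c')).

Lemma mPsi_ku2 (c a : {poly k}) : ku2 c -> psi c a = c * a.
Proof.
case=> q ->; rewrite mPsiE GA_comp_X2 XA_comp_X2 GA0 !mulr0 !scaler0 !addr0 subr0.
have half_add_half : 2^-1 + 2^-1 = 1 :> k by field.
by rewrite addrAC addrK -scalerDl half_add_half scale1r mulrC.
Qed.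

Lemma mPsi_odd_X (c : {poly k}) :
  GA c = - c -> psi c 'X = - ('X * c) + (xi * gamma) *: XA gamma c.
Proof.
move=> odd_c; rewrite mPsiE odd_c GAX XAX GAC.
apply/polyP => i; rewrite ?(coefD, coefN, coefZ, coefCM, mulrN, mulNr, opprK).
by field.
Qed.

Lemma odd_mPsi_X_eq0 (c : {poly k}) : GA c = - c -> c * 'X = psi c 'X -> c = 0.
Proof.
move=> odd_c; rewrite mPsi_odd_X // mulrC => /eqP; rewrite addrC -subr_eq opprK.
rewrite -mulr2n -scaler_nat => /eqP twice_c; apply/eqP; apply: contraT => c_neq0.
have : (size (2%:R *: ('X * c)) <= size c)%N.
  by rewrite twice_c (leq_trans (size_scale_leq _ _) (size_XA _ _)).
by rewrite size_scale // mulrC size_mulX // ltnn.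
Qed.

Lemma ku2_of_GA_fixed (p : {poly k}) : GA p = p -> ku2 p.
Proof.
have def_p := poly_even_odd p; set o := (odd_poly p \Po 'X^2) * 'X in def_p.
have GAp : GA p = even_poly p \Po 'X^2 - o.
  by rewrite -{1}def_p GAE comp_polyD comp_polyM comp_polyX -!GAE !GA_comp_X2 mulrN.
move=> fixed_p; exists (even_poly p).
suff o_eq0 : o = 0 by rewrite -{1}def_p -/o o_eq0 addr0.
move/eqP: fixed_p; rewrite GAp -{2}def_p (inj_eq (addrI _)) eq_sym -subr_eq0 opprK.
by rewrite -mulr2n -scaler_nat scaler_eq0 (negbTE two_neq0) => /eqP.
Qed.

Lemma ku2_of_odd_part_braided (p : {poly k}) :
  (p - GA p) * 'X = psi (p - GA p) 'X -> ku2 p.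
Proof.
move=> braided; apply: ku2_of_GA_fixed; apply/eqP; rewrite eq_sym -subr_eq0.
by rewrite (odd_mPsi_X_eq0 _ braided) // GAB GAK opprB.
Qed.

Lemma ku2_Ksubmod : is_Ksubmod gamma (@ku2 k).
Proof.
split.
- by exists 0; rewrite comp_poly0.
- by move=> _ _ [p ->] [q ->]; exists (p + q); rewrite comp_polyD.
- by move=> a _ [p ->]; exists (a *: p); rewrite comp_polyZ.
- by move=> _ [p ->]; exists p; rewrite GA_comp_X2.
- by move=> _ [p ->]; exists 0; rewrite XA_comp_X2 comp_poly0.
Qed.

Lemma ku2_left_center : is_left_center xi gamma (@ku2 k).
Proof.
split=> [||C [_ C_D C_Z C_GA _] C_central p Cp]; first exact: ku2_Ksubmod.
  by move=> c a; apply: mPsi_ku2.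
apply: ku2_of_odd_part_braided; rewrite C_central //.
by apply: C_D => //; rewrite -scaleN1r; apply/C_Z/C_GA.
Qed.

Lemma admissible_ku2 (Z : lmodType k) (gZ xZ : Z -> Z) (zeta : Z -> {poly k}) :
  admissible_pair xi gamma gZ xZ zeta -> forall z, ku2 (zeta z).
Proof.
case=> zeta_lin zeta_g zeta_x zeta_central z; apply: ku2_of_odd_part_braided.
have <- : zeta ((-1) *: gZ z + z) = zeta z - GA (zeta z).
  by rewrite zeta_lin zeta_g scaleN1r addrC.
by rewrite zeta_central (mPsi_natural xi _ _ _ zeta_g zeta_x).
Qed.

Lemma ku2_B_center : is_B_center xi gamma (@ku2 k).
Proof.
split=> [||Z gZ xZ _ _ _ zeta adm]; first exact: ku2_Ksubmod.
  by move=> c a /mPsi_ku2 ->.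
have [zeta_lin zeta_g zeta_x _] := adm; cbv zeta; split.
  by exists zeta; split=> //; apply: admissible_ku2 adm.
by move=> phi1 phi2 [_ _ _ _ phi1E] [_ _ _ _ phi2E] z; rewrite phi1E phi2E.
Qed.

End Center.

Theorem proposition7p2 (k : fieldType) (xi gamma : k) (hchar : (2%:R : k) != 0) :
  [/\ is_B_center xi gamma (@ku2 k),
      is_left_center xi gamma (@ku2 k),
      (* k[u^2] is a (commutative) subalgebra of A_gamma *)
      (ku2 (1 : {poly k}) /\ forall p q : {poly k}, ku2 p -> ku2 q -> ku2 (p * q)),
      (* braided commutativity of k[u^2] *)
      (forall p q : {poly k}, ku2 p -> ku2 q ->
         mPsi xi (@GA k) (XA gamma) (@GA k) (XA gamma) (fun a c => a * c) p q = p * q) &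
      (GA ('X^2 : {poly k}) = 'X^2 /\ XA gamma ('X^2 : {poly k}) = 0)].
Proof.
have X2E : 'X^2 = 'X \Po ('X^2 : {poly k}) by rewrite comp_polyX.
split; [exact: ku2_B_center | exact: ku2_left_center | split | | ].
- by exists 1; rewrite comp_polyC.
- by move=> _ _ [p ->] [q ->]; exists (p * q); rewrite comp_polyM.
- by move=> p q ku2p _; apply: mPsi_ku2.
- by rewrite X2E GA_comp_X2 XA_comp_X2.
Qed.
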